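(* Let $k$ be a difference field of characteristic $0$ and $R=k\{y_1,\ldots,y_n\}$. Any strictly ascending chain of radical well-mixed monomial $\sigma$-ideals in $R$ is finite.
   Context: A difference field is a field $k$ with a ring endomorphism $\sigma$. $R=k\{y_1,\ldots,y_n\}$ is the polynomial ring over $k$ in the variables $\sigma^j(y_i)$ ($1\le i\le n$, $j\ge0$), with $\sigma$ extended naturally. For $p=\sum_i c_ix^i\in\mathbb{N}[x]$ and $a\in R$, $a^p=\prod_i(\sigma^i(a))^{c_i}$; a monomial is $\mathbf{y}^{\mathbf{u}}=y_1^{u_1}\cdots y_n^{u_n}$ with $\mathbf{u}\in\mathbb{N}[x]^n$. A $\sigma$-ideal is an ideal stable under $\sigma$; a monomial $\sigma$-ideal is a $\sigma$-ideal generated (as an ideal/$\sigma$-ideal) by monomials. A $\sigma$-ideal $I$ is well-mixed if $ab\in I$ implies $a\sigma(b)\in I$; radical means radical as an ideal. *)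

From HB Require Import structures.
From mathcomp Require Import all_boot all_order all_algebra.
From mathcomp Require Import finmap.
From mathcomp.multinomials Require Import monalg.
Set Implicit Arguments. Unset Strict Implicit. Unset Printing Implicit Defensive.
Import GRing.Theory.
Local Open Scope ring_scope.

(* The variables sigma^j(y_i), indexed by (i, j) with i < n, j : nat. *)
Definition dvar (n : nat) := ('I_n * nat)%type.

Definition dmonom (n : nat) := {cmonom (dvar n)}.

(* R = k{y_1,...,y_n} : the polynomial ring over k in the variables
   sigma^j(y_i) (monoid algebra of the free commutative monoid on them). *)
Definition dpoly (k : fieldType) (n : nat) := {malg k[dmonom n]}.

Definition dY (k : fieldType) (n : nat) (v : dvar n) : dpoly k n :=
  << ucm v >>.

(* The extension of sigma to R: coefficients are mapped by sigma and
   sigma^j(y_i) is mapped to sigma^(j+1)(y_i). *)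
Definition dsigma (k : fieldType) (n : nat) (s : {rmorphism k -> k})
    (f : dpoly k n) : dpoly k n :=
  mmap (fun c : k => (s c)%:MP : dpoly k n)
       (fun m : dmonom n =>
          \prod_(v <- finsupp m) dY k (v.1, v.2.+1) ^+ m v) f.

Section Ideals.
Variable (R : comRingType) (s : R -> R).

Definition is_ideal (I : R -> Prop) : Prop :=
  [/\ I 0,
      (forall a b, I a -> I b -> I (a + b)) &
      (forall r a, I a -> I (r * a))].

Definition ideal_gen (S : R -> Prop) : R -> Prop :=
  fun x => forall J, is_ideal J -> (forall a, S a -> J a) -> J x.

Definition is_sigma_ideal (I : R -> Prop) : Prop :=
  is_ideal I /\ (forall a, I a -> I (s a)).

Definition well_mixed (I : R -> Prop) : Prop :=
  forall a b, I (a * b) -> I (a * s b).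

Definition radical (I : R -> Prop) : Prop :=
  forall a (m : nat), I (a ^+ m) -> I a.
End Ideals.

Definition is_dmonomial (k : fieldType) (n : nat) (f : dpoly k n) : Prop :=
  exists u : dmonom n, f = << u >>.

Definition monomial_sigma_ideal (k : fieldType) (n : nat)
    (s : {rmorphism k -> k}) (I : dpoly k n -> Prop) : Prop :=
  is_sigma_ideal (dsigma s) I /\
  exists S : dpoly k n -> Prop,
    (forall f, S f -> is_dmonomial f) /\ (forall f, I f <-> ideal_gen S f).

From HB Require Import structures.
From mathcomp Require Import all_boot all_order all_algebra.
From mathcomp Require Import finmap.
From mathcomp.multinomials Require Import monalg.
From Stdlib Require Import Classical ClassicalEpsilon.
Set Implicit Arguments. Unset Strict Implicit. Unset Printing Implicit Defensive.
Import GRing.Theory.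

(* Choose monomials u_m in I_(m+1) but not in I_m: a monomial ideal contains
   every monomial of each of its elements.  Record for every y_i the highest
   order of a sigma^j(y_i) occurring in u_m; by Dickson's lemma some a < b has
   all recorded orders of u_a bounded by those of u_b.  Since x y in I implies
   x sigma(y) in I, every variable of u_a can be raised to the highest order of
   the same y_i in u_b without leaving I_(a+1).  The resulting monomial divides
   a power of u_b, so u_b lies in the radical ideal I_(a+1), which is contained
   in I_b: a contradiction.  Neither sigma-stability nor the characteristic
   plays any role. *)

Lemma exists_argmin_after (g : nat -> nat) x :
  exists i, x < i /\ forall j, x < j -> g i <= g j.
Proof.
suff min_below v i : x < i -> g i <= v ->
    exists i, x < i /\ forall j, x < j -> g i <= g j.
  exact: (min_below _ x.+1).
elim: v i => [|v IHv] i xi gi.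
  by exists i; split=> // j _; move: gi; rewrite leqn0 => /eqP ->.
have [[j [xj gj]] | no_smaller] := classic (exists j, x < j /\ g j <= v).
  exact: IHv xj gj.
exists i; split=> // j xj; rewrite leqNgt; apply/negP => gji.
by apply: no_smaller; exists j; split=> //; rewrite -ltnS (leq_trans gji).
Qed.

Lemma exists_monotone_subseq (g : nat -> nat) : exists2 phi : nat -> nat,
  forall a, phi a < phi a.+1 & forall a, g (phi a) <= g (phi a.+1).
Proof.
have [next next_spec] := choice _ (exists_argmin_after g).
have lt_next x : x < next x by case: (next_spec x).
exists (fun a => iter a.+1 next 0) => a /=; first exact: lt_next.
have [_ min_next] := next_spec (iter a next 0).
exact/min_next/(ltn_trans (lt_next _) (lt_next _)).
Qed.

Lemma dickson_subseq (k : nat) (f : nat -> nat -> nat) :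
  exists2 phi : nat -> nat, forall a, phi a < phi a.+1 &
  forall a i, i < k -> f (phi a) i <= f (phi a.+1) i.
Proof.
elim: k => [|k [phi phi_lt phi_le]]; first by exists id.
have [psi psi_lt psi_le] := exists_monotone_subseq (fun a => f (phi a) k).
exists (phi \o psi) => [a | a i]; first exact: homo_ltn ltn_trans phi_lt _ _ _.
rewrite ltnS leq_eqVlt => /orP[/eqP -> | lt_ik]; first exact: psi_le.
have f_mono : {homo (fun a => f (phi a) i) : a b / a <= b}.
  exact: homo_leq leqnn leq_trans (fun a => phi_le a i lt_ik).
exact/f_mono/ltnW.
Qed.

Lemma dickson_pair (k : nat) (f : nat -> nat -> nat) :
  exists a b, a < b /\ forall i, i < k -> f a i <= f b i.
Proof.
have [phi phi_lt phi_le] := dickson_subseq k f.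
by exists (phi 0), (phi 1); split=> [|i]; [apply: phi_lt | apply: phi_le].
Qed.

Local Open Scope ring_scope.

Section IdealTheory.
Variables (R : comNzRingType) (I : R -> Prop).
Hypothesis idealI : is_ideal I.

Lemma ideal0 : I 0.
Proof. by case: idealI. Qed.

Lemma idealD a b : I a -> I b -> I (a + b).
Proof. by case: idealI => _ + _; apply. Qed.

Lemma idealMl r a : I a -> I (r * a).
Proof. by case: idealI => _ _; apply. Qed.

End IdealTheory.

Lemma ideal_gen_ideal (R : comNzRingType) (S : R -> Prop) :
  is_ideal (ideal_gen S).
Proof.
split=> [J [] // | a b Sa Sb J idJ SJ | r a Sa J idJ SJ].
  by apply: (idealD idJ); [exact: Sa | exact: Sb].
by apply: (idealMl idJ); exact: Sa.
Qed.

Lemma ideal_gen_sub (R : comNzRingType) (S : R -> Prop) a :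
  S a -> ideal_gen S a.
Proof. by move=> Sa J _; apply. Qed.

Section MonoidAlgebra.
Variables (R : comNzRingType) (K : conomType).
Local Notation A := {malg R[K]}.

Lemma malgUM (u v : K) : << mmul u v >> = <<u>> * <<v>> :> A.
Proof. by rewrite malgM_def fgmulUU mulr1. Qed.

Lemma ideal_msupp (I : A -> Prop) f :
  is_ideal I -> (forall u, u \in msupp f -> I <<u>>) -> I f.
Proof.
move=> idI Imsupp; rewrite (monalgE f) big_seq.
elim/big_rec: _ => [|u g uf Ig]; first exact: ideal0.
have -> : << f@_u *g u >> = (f@_u)%:MP * <<u>> :> A.
  by rewrite malgM_def fgmulUU mulr1 mul1m.
by apply: (idealD idI) => //; apply/(idealMl idI)/Imsupp.
Qed.

Lemma msupp_ideal_gen (S : A -> Prop) :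
  (forall f, S f -> exists u, f = <<u>>) ->
  forall f, ideal_gen S f -> forall u, u \in msupp f -> ideal_gen S <<u>>.
Proof.
move=> S_monomial f Sf.
apply: (Sf (fun g => forall u, u \in msupp g -> ideal_gen S <<u>>)).
  split.
  - by move=> u; rewrite msupp0.
  - move=> a b Sa Sb u /(fsubsetP (msuppD_le a b)).
    by rewrite in_fsetU => /orP[/Sa | /Sb].
  - move=> r a Sa _ /msuppM_le[x [y [_ /Sa Sy ->]]].
    by rewrite malgUM; apply: (idealMl (ideal_gen_ideal S)).
move=> g Sg u; have [w gw] := S_monomial g Sg.
by rewrite gw msuppU1 in_fset1 => /eqP ->; rewrite -gw; apply: ideal_gen_sub.
Qed.

Lemma monomial_ideal_separating (I J : A -> Prop) f :
  is_ideal I -> (forall g, J g -> forall u, u \in msupp g -> J <<u>>) ->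
  J f -> ~ I f -> exists u, J <<u>> /\ ~ I <<u>>.
Proof.
move=> idI J_msupp Jf nIf; apply: NNPP => no_sep.
apply/nIf/(ideal_msupp idI) => u uf.
by apply: NNPP => nIu; apply: no_sep; exists u; split=> //; apply: J_msupp uf.
Qed.

End MonoidAlgebra.

Section Monomials.
Variable (I : choiceType).
Implicit Types (u w : {cmonom I}).

Lemma cmE_le_mdeg u i : (u i <= mdeg u)%N.
Proof.
have [ui | ] := boolP (i \in finsupp u); last by rewrite -cmE_eq0 => /eqP ->.
by rewrite mdegE (big_rem i ui) leq_addr.
Qed.

Lemma divcmUK u e : e \in finsupp u -> mmul (divcm u (ucm e)) (ucm e) = u.
Proof.
rewrite -cmE_neq0 => ue; apply/eqP/cmP => i; rewrite cmM divcmE cmU.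
by case: eqP => [<- | _]; rewrite ?subn0 ?addn0 // subnK // lt0n.
Qed.

Lemma finsupp_divcm u w : {subset finsupp (divcm u w) <= finsupp u}.
Proof. by move=> i; rewrite -!cmE_neq0 divcmE; apply: contra => /eqP ->. Qed.

Lemma malgU_dvd_pow (R : comNzRingType) u w :
  {subset finsupp w <= finsupp u} ->
  exists z, <<u>> ^+ mdeg w = << mmul w z >> :> {malg R[{cmonom I}]}.
Proof.
move=> sub_wu; pose y t := iter t (mmul u) mone.
have y_pow t : << y t >> = <<u>> ^+ t :> {malg R[{cmonom I}]}.
  by elim: t => [|t IHt]; rewrite ?expr0 ?mpolyC1E // exprS -IHt -malgUM.
have y_val t i : y t i = (t * u i)%N.
  by elim: t => [|t IHt]; rewrite /= ?cm1 // cmM IHt mulSn.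
exists (divcm (y (mdeg w)) w); rewrite -y_pow; congr <<_>>.
apply/eqP/cmP => i; rewrite cmM divcmE subnKC // y_val.
have [/sub_wu ui | ] := boolP (i \in finsupp w); last first.
  by rewrite -cmE_eq0 => /eqP ->.
by rewrite (leq_trans (cmE_le_mdeg w i)) // leq_pmulr // lt0n cmE_neq0.
Qed.

End Monomials.

Section DifferenceIdeals.
Variables (k : fieldType) (n : nat) (s : {rmorphism k -> k}).
Local Notation P := (dpoly k n).
Local Notation M := (dmonom n).

Lemma dsigmaY (e : dvar n) : dsigma s (dY k e) = dY k (e.1, e.2.+1).
Proof.
rewrite /dsigma /dY mmapE msuppU1 big_seq_fset1 mcoeffUU rmorph1 mpolyC1E.
by rewrite mul1r mdomU big_seq_fset1 cmUU expr1.
Qed.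

Lemma monomial_sigma_ideal_msupp (I : P -> Prop) :
  monomial_sigma_ideal s I ->
  forall f, I f -> forall u, u \in msupp f -> I <<u>>.
Proof.
case=> _ [S [S_monomial I_gen]] f /I_gen If u uf.
exact: (I_gen _).2 (@msupp_ideal_gen k M S S_monomial f If u uf).
Qed.

Variable I : P -> Prop.
Hypothesis wmI : well_mixed (dsigma s) I.

Lemma well_mixed_shiftU (m : M) (e : dvar n) t :
  I << mmul m (ucm e) >> -> I << mmul m (ucm (e.1, e.2 + t)%N) >>.
Proof.
move=> Ie; elim: t => [|t IHt]; first by rewrite addn0 -surjective_pairing.
by move: IHt; rewrite !malgUM => /wmI; rewrite dsigmaY addnS.
Qed.

Lemma well_mixed_raise (lam : 'I_n -> nat) (u v : M) :
  (forall e, e \in finsupp u -> (e.2 <= lam e.1)%N) -> I << mmul v u >> ->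
  exists2 w : M, I << mmul v w >> & forall e, e \in finsupp w ->
    e.2 = lam e.1 /\ exists2 e', e' \in finsupp u & e'.1 = e.1.
Proof.
have [d] := ubnP (mdeg u); elim: d => // d IHd in u v *.
move=> lt_ud le_lam Iu; have [u0 | [e ue]] := fset_0Vmem (finsupp u).
  by exists u => // e; rewrite u0.
pose u' := divcm u (ucm e); have def_u := divcmUK ue.
have lt_u'd : (mdeg u' < d)%N.
  by move: lt_ud; rewrite -def_u mdegM mdegU addn1 ltnS.
have Iu' : I << mmul (mmul v (ucm (e.1, lam e.1))) u' >>.
  rewrite Monoid.mulmAC -(subnKC (le_lam e ue)).
  by apply: well_mixed_shiftU; rewrite -mulmA def_u.
have le_lam' x : x \in finsupp u' -> (x.2 <= lam x.1)%N.
  by move/finsupp_divcm; apply: le_lam.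
have [w Iw w_spec] := IHd u' _ lt_u'd le_lam' Iu'.
exists (mmul (ucm (e.1, lam e.1)) w); first by rewrite mulmA.
move=> x; rewrite mdomD mdomU in_fsetU in_fset1 => /orP[/eqP -> | xw].
  by split=> //; exists e.
have [x2 [e' e'u' e'x]] := w_spec x xw.
by split=> //; exists e' => //; apply: finsupp_divcm e'u'.
Qed.

End DifferenceIdeals.

(* [dorder u i] is one more than the highest j such that sigma^j(y_i) occurs
   in u, and 0 if y_i does not occur at all. *)
Definition dorder n (u : dmonom n) (i : nat) : nat :=
  (\max_(e <- finsupp u | nat_of_ord e.1 == i) e.2.+1)%N.

Lemma dorder_gt n (u : dmonom n) e : e \in finsupp u -> (e.2 < dorder u e.1)%N.
Proof. by move=> ue; apply: (leq_bigmax_seq (F := fun e => e.2.+1) e ue). Qed.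

Lemma bigmax_seq_attained (T : eqType) (r : seq T) (p : pred T) (F : T -> nat) :
  (0 < \max_(x <- r | p x) F x)%N ->
  exists2 x, x \in r & p x /\ F x = \max_(x <- r | p x) F x.
Proof.
elim: r => [|a r IHr]; first by rewrite big_nil.
rewrite big_cons; case: ifP => pa max_gt0; last first.
  by have [x xr px] := IHr max_gt0; exists x; rewrite ?inE ?xr ?orbT.
have [le_max_a | lt_a_max] := leqP (\max_(x <- r | p x) F x) (F a).
  by exists a; rewrite ?inE ?eqxx // (maxn_idPl le_max_a).
have [x xr [px Fx]] := IHr (leq_ltn_trans (leq0n _) lt_a_max).
by exists x; rewrite ?inE ?xr ?orbT // (maxn_idPr (ltnW lt_a_max)).
Qed.

Lemma dorder_mem n (u : dmonom n) (i : 'I_n) j :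
  j.+1 = dorder u i -> (i, j) \in finsupp u.
Proof.
move=> dorder_ij; have [[i' j'] ue [/eqP /= ii' jj']] :=
  bigmax_seq_attained (leq_trans (ltn0Sn j) (eq_leq dorder_ij)).
have -> : j = j' by apply: succn_inj; rewrite dorder_ij; exact: esym jj'.
by rewrite -(ord_inj ii').
Qed.

Lemma dorder_le_mem (k : fieldType) (s : {rmorphism k -> k}) n
    (I : dpoly k n -> Prop) :
  is_ideal I -> radical I -> well_mixed (dsigma s) I ->
  forall u v : dmonom n,
  (forall i : 'I_n, dorder u i <= dorder v i)%N -> I <<u>> -> I <<v>>.
Proof.
move=> idI radI wmI u v le_uv Iu; pose lam (i : 'I_n) := (dorder v i).-1.
have le_lam e : e \in finsupp u -> (e.2 <= lam e.1)%N.
  move=> ue; have := leq_trans (dorder_gt ue) (le_uv e.1).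
  by rewrite /lam; case: dorder.
have Iu1 : I << mmul mone u >> by rewrite mul1m.
have [w] := well_mixed_raise wmI le_lam Iu1; rewrite mul1m => Iw w_spec.
have sub_wv : {subset finsupp w <= finsupp v}.
  move=> x xw; have [x2 [e' e'u e'x]] := w_spec x xw.
  rewrite [x]surjective_pairing x2; apply: dorder_mem; rewrite /lam prednK //.
  rewrite (leq_trans _ (le_uv x.1)) // -e'x.
  exact: leq_ltn_trans (leq0n _) (dorder_gt e'u).
have [z v_pow] := malgU_dvd_pow k sub_wv.
by apply: (radI _ (mdeg w)); rewrite v_pow malgUM mulrC; apply: idealMl.
Qed.

Theorem corollary5p7 (k : fieldType) (s : {rmorphism k -> k})
  (hchar : [pchar k]%R =i pred0) (n : nat) :
  ~ exists I : nat -> (dpoly k n -> Prop),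
      forall m : nat,
        [/\ monomial_sigma_ideal s (I m),
            radical (I m), well_mixed (dsigma s) (I m),
            (forall f, I m f -> I m.+1 f) &
            exists f, I m.+1 f /\ ~ I m f].
Proof.
case=> I chainI.
have idealI m : is_ideal (I m) by case: (chainI m) => [[[]]].
have I_mono a b : (a <= b)%N -> forall f, I a f -> I b f.
  move=> /subnK <-; elim: (b - a)%N => // t IHt f /IHt If.
  by rewrite addSn; case: (chainI (t + a)%N) => _ _ _ /(_ f If).
have sep m : exists u : dmonom n, I m.+1 <<u>> /\ ~ I m <<u>>.
  case: (chainI m) (chainI m.+1) => _ _ _ _ [f [If nIf]] [mono _ _ _ _].
  have mono_msupp := monomial_sigma_ideal_msupp mono.
  exact: monomial_ideal_separating (idealI m) mono_msupp If nIf.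
have [U U_sep] := choice _ sep.
have [a [b [lt_ab le_ab]]] := dickson_pair n (fun m => dorder (U m)).
case: (U_sep b) => _; apply; apply: I_mono lt_ab _ _.
case: (chainI a.+1) => _ radI wmI _ _.
apply: dorder_le_mem (idealI _) radI wmI _ _ _ (U_sep a).1 => i.
exact: le_ab (ltn_ord i).
Qed.
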